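(* $\mathbf{FO}(\sim) = \mathbf{FO}(\mathrm{NE}, \sqcup)$; that is, every formula of $\mathbf{FO}(\sim)$ is equivalent (under team semantics) to some formula of $\mathbf{FO}(\mathrm{NE},\sqcup)$, and every formula of $\mathbf{FO}(\mathrm{NE},\sqcup)$ is equivalent to some formula of $\mathbf{FO}(\sim)$.
   Context: Team semantics (lax version). Let $\mathfrak M$ be a first-order structure with domain $M$. A team $X$ over $\mathfrak M$ with domain a finite set $V$ of variables is a (possibly empty) set of assignments $s: V\to M$. Satisfaction $\mathfrak M\models_X\phi$ for formulas in negation normal form: for a first-order literal $\alpha$, $\mathfrak M\models_X\alpha$ iff every $s\in X$ satisfies $\alpha$ in Tarski semantics; $\mathfrak M\models_X\psi\vee\theta$ iff $X=Y\cup Z$ for some $Y,Z\subseteq X$ with $\mathfrak M\models_Y\psi$ and $\mathfrak M\models_Z\theta$; $\mathfrak M\models_X\psi\wedge\theta$ iff $\mathfrak M\models_X\psi$ and $\mathfrak M\models_X\theta$; $\mathfrak M\models_X\exists v\psi$ iff there is $F:X\to\mathcal P(M)\setminus\{\emptyset\}$ with $\mathfrak M\models_{X[F/v]}\psi$, where $X[F/v]=\{s[m/v]:s\in X,m\in F(s)\}$; $\mathfrak M\models_X\forall v\psi$ iff $\mathfrak M\models_{X[M/v]}\psi$, where $X[M/v]=\{s[m/v]:s\in X,m\in M\}$. Extra operators: the nonemptiness atom $\mathrm{NE}$ with $\mathfrak M\models_X\mathrm{NE}$ iff $X\neq\emptyset$; classical disjunction $\mathfrak M\models_X\phi\sqcup\psi$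 iff $\mathfrak M\models_X\phi$ or $\mathfrak M\models_X\psi$; contradictory negation $\mathfrak M\models_X\sim\phi$ iff $\mathfrak M\not\models_X\phi$ (which may be applied to arbitrary formulas). $\mathbf{FO}(\ldots)$ denotes first-order logic (in negation normal form) extended with the listed atoms/operators. Two formulas are equivalent if they are satisfied by exactly the same teams in all structures. *)

From mathcomp Require Import all_boot.
Set Implicit Arguments. Unset Strict Implicit. Unset Printing Implicit Defensive.

Record Sig := { fsym : Type; farity : fsym -> nat;
                rsym : Type; rarity : rsym -> nat }.

Inductive term (S : Sig) : Type :=
| TVar (x : nat)
| TApp (f : fsym S) (a : 'I_(@farity S f) -> term S).

Inductive atom (S : Sig) : Type :=
| AEq (t1 t2 : term S)
| ARel (R : rsym S) (a : 'I_(@rarity S R) -> term S).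

Inductive formula (S : Sig) : Type :=
| FPos (a : atom S)
| FNeg (a : atom S)
| FOr (p q : formula S)        (* split (tensor) disjunction *)
| FAnd (p q : formula S)
| FEx (v : nat) (p : formula S)
| FAll (v : nat) (p : formula S)
| FNE
| FSqcup (p q : formula S)
| FTilde (p : formula S).

Fixpoint in_FO_tilde S (p : formula S) : Prop :=
  match p with
  | FPos _ | FNeg _ => True
  | FOr p q | FAnd p q => in_FO_tilde p /\ in_FO_tilde q
  | FEx _ p | FAll _ p => in_FO_tilde p
  | FNE => False
  | FSqcup _ _ => False
  | FTilde p => in_FO_tilde p
  end.

Fixpoint in_FO_NE_sqcup S (p : formula S) : Prop :=
  match p with
  | FPos _ | FNeg _ => True
  | FOr p q | FAnd p q => in_FO_NE_sqcup p /\ in_FO_NE_sqcup q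
  | FEx _ p | FAll _ p => in_FO_NE_sqcup p
  | FNE => True
  | FSqcup p q => in_FO_NE_sqcup p /\ in_FO_NE_sqcup q
  | FTilde _ => False
  end.

Fixpoint occurs S (x : nat) (t : term S) : Prop :=
  match t with
  | TVar y => x = y
  | TApp f a => exists i, occurs x (a i)
  end.

Definition occurs_atom S (x : nat) (a : atom S) : Prop :=
  match a with
  | AEq t1 t2 => occurs x t1 \/ occurs x t2
  | ARel R a => exists i, occurs x (a i)
  end.

Fixpoint free S (x : nat) (p : formula S) : Prop :=
  match p with
  | FPos a | FNeg a => occurs_atom x a
  | FOr p q | FAnd p q | FSqcup p q => free x p \/ free x q
  | FEx v p | FAll v p => x <> v /\ free x p
  | FNE => False
  | FTilde p => free x p
  end.

Record structure (S : Sig) := {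
  carrier : Type;
  funI : forall f : fsym S, ('I_(@farity S f) -> carrier) -> carrier;
  relI : forall R : rsym S, ('I_(@rarity S R) -> carrier) -> Prop }.

Section Semantics.
Variables (S : Sig) (A : structure S).
Local Notation M := (carrier A).

(* An assignment with a finite domain is a partial function nat -> option M;
   its domain is the set of variables mapped to Some _. *)
Definition assignment := nat -> option M.
Definition team := assignment -> Prop.

Definition upd (s : assignment) (v : nat) (m : M) : assignment :=
  fun x => if x == v then Some m else s x.

Definition team_on (V : seq nat) (X : team) : Prop :=
  forall s, X s -> forall x, (s x <> None <-> x \in V).

(* Term evaluation (relational, since assignments are partial). *)
Fixpoint tval (s : assignment) (t : term S) (m : M) : Prop :=
  match t with
  | TVar x => s x = Some m
  | TApp f a => exists ms : 'I_(@farity S f) -> M,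
      (forall i, tval s (a i) (ms i)) /\ m = @funI S A f ms
  end.

Definition lit_sat (s : assignment) (a : atom S) (b : bool) : Prop :=
  match a with
  | AEq t1 t2 => exists m1 m2, tval s t1 m1 /\ tval s t2 m2 /\
                   (if b then m1 = m2 else m1 <> m2)
  | ARel R a => exists ms : 'I_(@rarity S R) -> M,
      (forall i, tval s (a i) (ms i)) /\
      (if b then @relI S A R ms else ~ @relI S A R ms)
  end.

Fixpoint sat (p : formula S) (X : team) : Prop :=
  match p with
  | FPos a => forall s, X s -> lit_sat s a true
  | FNeg a => forall s, X s -> lit_sat s a false
  | FOr p q => exists Y Z : team,
      (forall s, X s <-> Y s \/ Z s) /\ sat p Y /\ sat q Z
  | FAnd p q => sat p X /\ sat q X
  | FEx v p => exists F : assignment -> M -> Prop,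
      (forall s, X s -> exists m, F s m) /\
      sat p (fun s' => exists s m, X s /\ F s m /\ s' = upd s v m)
  | FAll v p => sat p (fun s' => exists s m, X s /\ s' = upd s v m)
  | FNE => exists s, X s
  | FSqcup p q => sat p X \/ sat q X
  | FTilde p => ~ sat p X
  end.

End Semantics.

Definition equivalent S (p q : formula S) : Prop :=
  forall (A : structure S), inhabited (carrier A) ->
  forall (V : seq nat) (X : team A),
    team_on V X ->
    (forall x, free x p -> x \in V) ->
    (forall x, free x q -> x \in V) ->
    (sat p X <-> sat q X).

(* First-order (flat) formulas are closed under dual negation, and a team satisfies one iff each
   of its assignments does. Every FO(~) formula is equivalent to a finite classical disjunction of
   clauses "alpha holds throughout the team and each beta_i holds somewhere in it": clauses are
   closed under split disjunction, conjunction and both quantifiers, and the contradictory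
   negation of a clause is again a disjunction of clauses, namely "the dual of alpha holds
   somewhere" or "the dual of some beta_i holds throughout". In FO(NE, sqcup) a clause reads
   alpha /\ ((beta_1 /\ NE) \/ (... \/ ((beta_k /\ NE) \/ T))) and the disjunction is sqcup.
   Conversely, NE is ~bot and psi sqcup theta is ~(~psi /\ ~theta). *)

From Pilot Require Import Defs.
From mathcomp Require Import all_boot.
From Stdlib Require Import Classical FunctionalExtensionality IndefiniteDescription.
Require Stdlib.Lists.List.

Set Implicit Arguments. Unset Strict Implicit. Unset Printing Implicit Defensive.

Section FirstOrder.
Variable S : Sig.

Inductive fo : Type :=
| OLit (a : atom S) (b : bool)
| OOr (p q : fo)
| OAnd (p q : fo)
| OEx (v : nat) (p : fo)
| OAll (v : nat) (p : fo).

Fixpoint of_fo (p : fo) : formula S :=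
  match p with
  | OLit a b => if b then FPos a else FNeg a
  | OOr p q => FOr (of_fo p) (of_fo q)
  | OAnd p q => FAnd (of_fo p) (of_fo q)
  | OEx v p => FEx v (of_fo p)
  | OAll v p => FAll v (of_fo p)
  end.

Fixpoint fo_neg (p : fo) : fo :=
  match p with
  | OLit a b => OLit a (~~ b)
  | OOr p q => OAnd (fo_neg p) (fo_neg q)
  | OAnd p q => OOr (fo_neg p) (fo_neg q)
  | OEx v p => OAll v (fo_neg p)
  | OAll v p => OEx v (fo_neg p)
  end.

(* Closed, hence true even under partial assignments. *)
Definition fo_true : fo := OAll 0 (OLit (AEq (TVar S 0) (TVar S 0)) true).
Definition fo_false : fo := fo_neg fo_true.

Definition fo_bounded (P : nat -> Prop) (p : fo) := forall x, free x (of_fo p) -> P x.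

Lemma free_fo_neg p x : free x (of_fo (fo_neg p)) <-> free x (of_fo p).
Proof. by elim: p => [a []|p IHp q IHq|p IHp q IHq|v p IHp|v p IHp] /=; firstorder. Qed.

Lemma fo_bounded_neg P p : fo_bounded P p -> fo_bounded P (fo_neg p).
Proof. by move=> hp x /free_fo_neg /hp. Qed.

Lemma fo_bounded_true P : fo_bounded P fo_true.
Proof. by move=> x /= [hx0 [] /hx0]. Qed.

Lemma fo_bounded_sub P Q p : (forall x, P x -> Q x) -> fo_bounded P p -> fo_bounded Q p.
Proof. by move=> PQ hp x /hp /PQ. Qed.

Lemma in_FO_NE_sqcup_of_fo p : in_FO_NE_sqcup (of_fo p).
Proof. by elim: p => [a []|p IHp q IHq|p IHp q IHq|v p IHp|v p IHp]. Qed.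

Lemma in_FO_tilde_of_fo p : in_FO_tilde (of_fo p).
Proof. by elim: p => [a []|p IHp q IHq|p IHp q IHq|v p IHp|v p IHp]. Qed.

(* A clause [(a, bs)] stands for "[a] holds throughout the team and every [b] in [bs] holds
   somewhere in it"; a list of clauses stands for their classical disjunction. *)
Definition clause := (fo * list fo)%type.

(* A witness of a disjunct lies in its part of the split, where its first component holds. *)
Definition clause_or (C1 C2 : clause) : clause :=
  (OOr C1.1 C2.1, List.app (List.map (OAnd C1.1) C1.2) (List.map (OAnd C2.1) C2.2)).

Definition clause_and (C1 C2 : clause) : clause := (OAnd C1.1 C2.1, List.app C1.2 C2.2).

Definition clause_ex v (C : clause) : clause :=
  (OEx v C.1, List.map (fun b => OEx v (OAnd C.1 b)) C.2).

Definition clause_all v (C : clause) : clause := (OAll v C.1, List.map (OEx v) C.2).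

Definition clause_neg (C : clause) : list clause :=
  (fo_true, [:: fo_neg C.1]) :: List.map (fun b => (fo_neg b, [::])) C.2.

Definition cross (f : clause -> clause -> clause) (L1 L2 : list clause) : list clause :=
  List.map (fun C => f C.1 C.2) (List.list_prod L1 L2).

Fixpoint nf_not (N : list clause) : list clause :=
  match N with
  | [::] => [:: (fo_true, [::])]
  | C :: N => cross clause_and (clause_neg C) (nf_not N)
  end.

Lemma in_cross f L1 L2 C :
  List.In C (cross f L1 L2) <->
  exists C1 C2, [/\ List.In C1 L1, List.In C2 L2 & C = f C1 C2].
Proof.
rewrite List.in_map_iff; split=> [[[C1 C2] [<- /List.in_prod_iff [h1 h2]]]|].
  by exists C1, C2.
by move=> [C1 [C2 [h1 h2 ->]]]; exists (C1, C2); split=> //; exact: List.in_prod.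
Qed.

Definition clause_bounded P (C : clause) :=
  fo_bounded P C.1 /\ forall b, List.In b C.2 -> fo_bounded P b.

Definition nf_bounded P (N : list clause) := forall C, List.In C N -> clause_bounded P C.

Lemma nf_bounded_map P Q (f : clause -> clause) N :
  (forall C, clause_bounded P C -> clause_bounded Q (f C)) ->
  nf_bounded P N -> nf_bounded Q (List.map f N).
Proof. by move=> hf hN _ /List.in_map_iff [C [<- /hN]]; apply: hf. Qed.

Lemma nf_bounded_sub P Q N : (forall x, P x -> Q x) -> nf_bounded P N -> nf_bounded Q N.
Proof.
move=> PQ hN C /hN [h1 h2]; split; first exact: fo_bounded_sub h1.
by move=> b /h2; apply: fo_bounded_sub.
Qed.

Lemma nf_bounded_cross P f L1 L2 :
  (forall C1 C2, clause_bounded P C1 -> clause_bounded P C2 -> clause_bounded P (f C1 C2)) ->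
  nf_bounded P L1 -> nf_bounded P L2 -> nf_bounded P (cross f L1 L2).
Proof. by move=> hf h1 h2 _ /in_cross [C1 [C2 [/h1 hC1 /h2 hC2 ->]]]; apply: hf. Qed.

Lemma clause_bounded_or P C1 C2 :
  clause_bounded P C1 -> clause_bounded P C2 -> clause_bounded P (clause_or C1 C2).
Proof.
move=> [a1 b1] [a2 b2]; split=> [x [/a1|/a2] //|b].
move=> /List.in_app_iff [] /List.in_map_iff [b' [<- hb]] x [];
  by [move/a1 | move/(b1 _ hb) | move/a2 | move/(b2 _ hb)].
Qed.

Lemma clause_bounded_and P C1 C2 :
  clause_bounded P C1 -> clause_bounded P C2 -> clause_bounded P (clause_and C1 C2).
Proof.
by move=> [a1 b1] [a2 b2]; split=> [x [/a1|/a2] //|b /List.in_app_iff [/b1|/b2]].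
Qed.

Lemma clause_bounded_ex P v C :
  clause_bounded P C -> clause_bounded (fun x => x <> v /\ P x) (clause_ex v C).
Proof.
move=> [a b]; split=> [x [hv /a hx]|_ /List.in_map_iff [b' [<- hb]] x].
  by split.
by move=> [hv [/a hx|/(b _ hb) hx]]; split.
Qed.

Lemma clause_bounded_all P v C :
  clause_bounded P C -> clause_bounded (fun x => x <> v /\ P x) (clause_all v C).
Proof.
move=> [a b]; split=> [x [hv /a hx]|_ /List.in_map_iff [b' [<- hb]] x [hv /(b _ hb) hx]];
  by split.
Qed.

Lemma nf_bounded_clause_neg P C : clause_bounded P C -> nf_bounded P (clause_neg C).
Proof.
move=> [a b] _ [<-|/List.in_map_iff [b' [<- /b hb]]].
- split; first exact: fo_bounded_true.
  by move=> _ [<-|[]]; exact: fo_bounded_neg.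
- by split=> [|_ []]; exact: fo_bounded_neg.
Qed.

Lemma nf_bounded_not P N : nf_bounded P N -> nf_bounded P (nf_not N).
Proof.
elim: N => [|C N IH] hN /=.
  by move=> _ [<-|[]]; split=> //; exact: fo_bounded_true.
apply: nf_bounded_cross; first exact: clause_bounded_and.
  by apply: nf_bounded_clause_neg; apply: hN; left.
by apply: IH => C' hC'; apply: hN; right.
Qed.

Fixpoint witnesses (bs : list fo) : formula S :=
  match bs with
  | [::] => of_fo fo_true
  | b :: bs => FOr (FAnd (of_fo b) (FNE S)) (witnesses bs)
  end.

Definition clause_formula (C : clause) : formula S := FAnd (of_fo C.1) (witnesses C.2).

Definition nf_formula (N : list clause) : formula S :=
  foldr (fun C q => FSqcup (clause_formula C) q) (FAnd (of_fo fo_false) (FNE S)) N.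

Fixpoint to_tilde (p : formula S) : formula S :=
  match p with
  | FPos a => FPos a
  | FNeg a => FNeg a
  | FOr p q => FOr (to_tilde p) (to_tilde q)
  | FAnd p q => FAnd (to_tilde p) (to_tilde q)
  | FEx v p => FEx v (to_tilde p)
  | FAll v p => FAll v (to_tilde p)
  | FNE => FTilde (of_fo fo_false)
  | FSqcup p q => FTilde (FAnd (FTilde (to_tilde p)) (FTilde (to_tilde q)))
  | FTilde p => FTilde (to_tilde p)
  end.

Lemma in_FO_NE_sqcup_nf_formula N : in_FO_NE_sqcup (nf_formula N).
Proof.
have wE bs : in_FO_NE_sqcup (witnesses bs).
  by elim: bs => [|b bs IH] //=; do ?split; try exact: in_FO_NE_sqcup_of_fo.
by elim: N => [|C N IH] //=; do ?split; try exact: in_FO_NE_sqcup_of_fo.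
Qed.

Lemma in_FO_tilde_to_tilde p : in_FO_tilde (to_tilde p).
Proof. by elim: p => //= *; do ?split; try exact: in_FO_tilde_of_fo. Qed.

Section Structure.
Variable A : structure S.
Implicit Types (s : assignment A) (X Y Z : team A).
Local Notation tval := (@Defs.tval S A).

Fixpoint holds (p : fo) s : Prop :=
  match p with
  | OLit a b => lit_sat s a b
  | OOr p q => holds p s \/ holds q s
  | OAnd p q => holds p s /\ holds q s
  | OEx v p => exists m, holds p (upd s v m)
  | OAll v p => forall m, holds p (upd s v m)
  end.

Definition team_ext X v (F : assignment A -> carrier A -> Prop) : team A :=
  fun s' => exists s m, X s /\ F s m /\ s' = upd s v m.

Definition team_dup X v : team A := fun s' => exists s m, X s /\ s' = upd s v m.

Lemma sat_of_fo p X : sat (of_fo p) X <-> forall s, X s -> holds p s.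
Proof.
elim: p X => [a []|p IHp q IHq|p IHp q IHq|v p IHp|v p IHp] X //=.
- split=> [[Y [Z [hX [/IHp hY /IHq hZ]]]] s /hX [/hY|/hZ]|h]; [by left|by right|].
  exists (fun s => X s /\ holds p s), (fun s => X s /\ holds q s); split; last first.
    by rewrite IHp IHq; split=> s [].
  by move=> s; split=> [hs|[] []//]; case: (h s hs); [left|right].
- by rewrite IHp IHq; firstorder.
- split=> [[F [hF /IHp h]] s hs|h].
    by case: (hF s hs) => m hm; exists m; apply: h; exists s, m.
  exists (fun s m => holds p (upd s v m)); split=> //.
  by apply/IHp => _ [s [m [_ [hm ->]]]].
- rewrite IHp; split=> [h s hs m|h _ [s [m [hs ->]]]]; last exact: h.
  by apply: h; exists s, m.
Qed.

Definition defined_on (P : nat -> Prop) s := forall x, P x -> s x <> None.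

Lemma defined_on_upd P v s m :
  defined_on (fun x => x <> v /\ P x) s -> defined_on P (upd s v m).
Proof. by rewrite /upd => hs x hx; case: eqP => // hxv; exact: hs (conj hxv hx). Qed.

Lemma tval_fun t s m1 m2 : tval s t m1 -> tval s t m2 -> m1 = m2.
Proof.
elim: t s m1 m2 => [x|f a IH] s m1 m2 /=; first by move=> -> [].
move=> [ms1 [h1 ->]] [ms2 [h2 ->]]; congr funI.
by apply: functional_extensionality => i; exact: IH (h1 i) (h2 i).
Qed.

Lemma tvals_fun n (a : 'I_n -> term S) s ms1 ms2 :
  (forall i, tval s (a i) (ms1 i)) -> (forall i, tval s (a i) (ms2 i)) -> ms1 = ms2.
Proof.
by move=> h1 h2; apply: functional_extensionality => i; exact: tval_fun (h1 i) (h2 i).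
Qed.

Lemma tvals_total n (a : 'I_n -> term S) s :
  (forall i, exists m, tval s (a i) m) -> exists ms, forall i, tval s (a i) (ms i).
Proof. exact: (functional_choice (fun i m => tval s (a i) m)). Qed.

Lemma tval_total (t : term S) s : defined_on (fun x => occurs x t) s -> exists m, tval s t m.
Proof.
elim: t => [x|f a IH] hs /=; first by case E: (s x) => [m|]; [exists m | case: (hs x)].
have [ms hms] : exists ms, forall i, tval s (a i) (ms i).
  by apply: tvals_total => i; apply: IH => x hx; apply: hs; exists i.
by exists (funI ms), ms.
Qed.

Lemma lit_sat_eq (t1 t2 : term S) s m1 m2 (b : bool) : tval s t1 m1 -> tval s t2 m2 ->
  lit_sat s (AEq t1 t2) b <-> (if b then m1 = m2 else m1 <> m2).
Proof.
move=> h1 h2 /=; split=> [[k1 [k2 [/(tval_fun h1) <- [/(tval_fun h2) <-]]]] //|].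
by exists m1, m2.
Qed.

Lemma lit_sat_rel (R : rsym S) (a : 'I_(rarity R) -> term S) s ms (b : bool) :
  (forall i, tval s (a i) (ms i)) ->
  lit_sat s (ARel a) b <-> (if b then relI ms else ~ relI ms).
Proof.
move=> hms /=; split=> [[ks [/(tvals_fun hms) <-]] //|].
by exists ms.
Qed.

Lemma lit_sat_negb a b s :
  defined_on (fun x => occurs_atom x a) s -> lit_sat s a (~~ b) <-> ~ lit_sat s a b.
Proof.
have notNE (P : Prop) : P <-> ~ ~ P by split; [tauto | exact: NNPP].
case: a => [t1 t2|R a] hs.
- have [m1 h1] : exists m, tval s t1 m by apply: tval_total => x hx; apply: hs; left.
  have [m2 h2] : exists m, tval s t2 m by apply: tval_total => x hx; apply: hs; right.
  by rewrite !(lit_sat_eq _ h1 h2); case: b; [|exact: notNE].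
- have [ms hms] : exists ms, forall i, tval s (a i) (ms i).
    by apply: tvals_total => i; apply: tval_total => x hx; apply: hs; exists i.
  by rewrite !(lit_sat_rel _ hms); case: b; [|exact: notNE].
Qed.

(* Assignments are partial, and a literal mentioning an unassigned variable fails both positively
   and negatively: dual negation is classical only where the free variables are assigned. *)
Lemma holds_fo_neg p s :
  defined_on (fun x => free x (of_fo p)) s -> holds (fo_neg p) s <-> ~ holds p s.
Proof.
elim: p s => [a b|p IHp q IHq|p IHp q IHq|v p IHp|v p IHp] s hs /=.
- by case: b hs => hs; exact: lit_sat_negb.
- rewrite IHp ?IHq => [|x hx|x hx]; [tauto | apply: hs; by right | apply: hs; by left].
- rewrite IHp ?IHq => [|x hx|x hx]; [ | apply: hs; by right | apply: hs; by left].
  by case: (classic (holds p s)); tauto.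
- have IHm m : holds (fo_neg p) (upd s v m) <-> ~ holds p (upd s v m).
    exact/IHp/defined_on_upd.
  by split=> [h [m]|h m]; [apply/IHm | apply/IHm => hm; apply: h; exists m].
- have IHm m : holds (fo_neg p) (upd s v m) <-> ~ holds p (upd s v m).
    exact/IHp/defined_on_upd.
  split=> [[m /IHm hm] h|/not_all_ex_not [m /IHm]]; last by exists m.
  exact: hm.
Qed.

Lemma holds_fo_true s : holds fo_true s.
Proof. by move=> m; exists m, m. Qed.

Lemma holds_fo_false s : ~ holds fo_false s.
Proof.
have closed : defined_on (fun x => free x (of_fo fo_true)) s.
  by move=> x /(@fo_bounded_true (fun _ => False)).
by move/(holds_fo_neg closed); apply; exact: holds_fo_true.
Qed.

Lemma holds_fo_neg_on P p s :
  fo_bounded P p -> defined_on P s -> holds (fo_neg p) s <-> ~ holds p s.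
Proof. by move=> hp hs; apply: holds_fo_neg => x /hp /hs. Qed.

Definition team_defined P X := forall s, X s -> defined_on P s.

Lemma team_defined_sub P Q X Y :
  (forall x, Q x -> P x) -> (forall s, Y s -> X s) -> team_defined P X -> team_defined Q Y.
Proof. by move=> QP YX hX s /YX /hX hs x /QP /hs. Qed.

Lemma team_defined_upd P v X Y :
  team_defined (fun x => x <> v /\ P x) X ->
  (forall s', Y s' -> exists s m, X s /\ s' = upd s v m) -> team_defined P Y.
Proof. by move=> hX hY _ /hY [s [m [/hX hs ->]]]; exact: defined_on_upd. Qed.

Definition team_split X Y Z := forall s, X s <-> Y s \/ Z s.

Definition clause_sat (C : clause) X :=
  (forall s, X s -> holds C.1 s) /\ (forall b, List.In b C.2 -> exists2 s, X s & holds b s).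

Definition nf_sat (N : list clause) X := exists2 C, List.In C N & clause_sat C X.

Lemma clause_sat_or C1 C2 X :
  clause_sat (clause_or C1 C2) X <->
  exists Y Z, [/\ team_split X Y Z, clause_sat C1 Y & clause_sat C2 Z].
Proof.
split=> [[hX hW]|[Y [Z [hXYZ [hY1 hY2] [hZ1 hZ2]]]]].
- exists (fun s => X s /\ holds C1.1 s), (fun s => X s /\ holds C2.1 s); split.
  + by move=> s; split=> [hs|[] []//]; case: (hX s hs); [left|right].
  + split=> [s [] //|b hb].
    have [s hs [h1 h2]] : exists2 s, X s & holds (OAnd C1.1 b) s.
      by apply: hW; apply/List.in_app_iff; left; exact: List.in_map.
    by exists s.
  + split=> [s [] //|b hb].
    have [s hs [h1 h2]] : exists2 s, X s & holds (OAnd C2.1 b) s.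
      by apply: hW; apply/List.in_app_iff; right; exact: List.in_map.
    by exists s.
- split=> [s /hXYZ [/hY1|/hZ1]|_ /List.in_app_iff [] /List.in_map_iff [b [<- hb]]].
  + by left.
  + by right.
  + have [s hs h] := hY2 b hb.
    by exists s; [apply/hXYZ; left | split=> //; exact: hY1].
  + have [s hs h] := hZ2 b hb.
    by exists s; [apply/hXYZ; right | split=> //; exact: hZ1].
Qed.

Lemma clause_sat_and C1 C2 X :
  clause_sat (clause_and C1 C2) X <-> clause_sat C1 X /\ clause_sat C2 X.
Proof.
split=> [[h1 h2]|[[h1 h2] [k1 k2]]].
- split; split=> [s /h1 [] //|b hb]; apply: h2; apply/List.in_app_iff; by [left|right].
- split=> [s hs|b /List.in_app_iff [/h2|/k2] //].
  by split; [exact: h1 | exact: k1].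
Qed.

Lemma clause_sat_ex v C X :
  clause_sat (clause_ex v C) X <->
  exists F, (forall s, X s -> exists m, F s m) /\ clause_sat C (team_ext X v F).
Proof.
split=> [[h1 h2]|[F [hF [h1 h2]]]].
- exists (fun s m => holds C.1 (upd s v m)); split=> //.
  split=> [_ [s [m [_ [hm ->]]]] //|b hb].
  have [s hs [m [ha hb']]] := h2 _ (List.in_map (fun b => OEx v (OAnd C.1 b)) _ _ hb).
  by exists (upd s v m) => //; exists s, m.
- split=> [s hs|_ /List.in_map_iff [b [<- hb]]].
  + by have [m hm] := hF s hs; exists m; apply: h1; exists s, m.
  + have [_ [s [m [hs [hm ->]]]] hb'] := h2 b hb.
    by exists s => //; exists m; split=> //; apply: h1; exists s, m.
Qed.

Lemma clause_sat_all v C X :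
  clause_sat (clause_all v C) X <-> clause_sat C (team_dup X v).
Proof.
split=> [[h1 h2]|[h1 h2]].
- split=> [_ [s [m [hs ->]]]|b hb]; first exact: h1.
  have [s hs [m hm]] := h2 _ (List.in_map (OEx v) _ _ hb).
  by exists (upd s v m) => //; exists s, m.
- split=> [s hs m|_ /List.in_map_iff [b [<- hb]]]; first by apply: h1; exists s, m.
  have [_ [s [m [hs ->]]] hb'] := h2 b hb.
  by exists s => //; exists m.
Qed.

Lemma clause_sat_neg P C X : clause_bounded P C -> team_defined P X ->
  nf_sat (clause_neg C) X <-> ~ clause_sat C X.
Proof.
move=> [ba bb] hX.
have negE b s : fo_bounded P b -> X s -> holds (fo_neg b) s <-> ~ holds b s.
  by move=> hb /hX; exact: holds_fo_neg_on.
split=> [[_ [<-|/List.in_map_iff [b [<- hb]]] [h1 h2]] [k1 k2]|hn].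
- have [s hs hn] := h2 _ (or_introl erefl).
  exact: (negE _ _ ba hs).1 hn (k1 s hs).
- have [s hs hbs] := k2 b hb.
  exact: (negE _ _ (bb b hb) hs).1 (h1 s hs) hbs.
- case: (classic (forall s, X s -> holds C.1 s)) => [h1|].
  + have /not_all_ex_not [b] : ~ forall b, List.In b C.2 -> exists2 s, X s & holds b s.
      by move=> h2; exact: hn.
    move=> /(@imply_to_and (List.In b C.2)) [hb hnb].
    exists (fo_neg b, [::]).
      by right; exact: (List.in_map (fun b => (fo_neg b, [::]))).
    split=> [s hs|? []]; apply/(negE _ _ (bb b hb) hs) => hbs.
    by apply: hnb; exists s.
  + move=> /not_all_ex_not [s /(@imply_to_and (X s)) [hs ha]].
    exists (fo_true, [:: fo_neg C.1]); first by left.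
    split=> [s' _|_ [<-|[]]]; first exact: holds_fo_true.
    by exists s => //; apply/(negE _ _ ba hs).
Qed.

Lemma nf_sat_cross f L1 L2 X :
  nf_sat (cross f L1 L2) X <->
  exists C1 C2, [/\ List.In C1 L1, List.In C2 L2 & clause_sat (f C1 C2) X].
Proof.
split=> [[_ /in_cross [C1 [C2 [h1 h2 ->]]] hC]|[C1 [C2 [h1 h2 hC]]]].
  by exists C1, C2.
by exists (f C1 C2) => //; apply/in_cross; exists C1, C2.
Qed.

Lemma nf_sat_or N1 N2 X :
  nf_sat (cross clause_or N1 N2) X <->
  exists Y Z, [/\ team_split X Y Z, nf_sat N1 Y & nf_sat N2 Z].
Proof.
rewrite nf_sat_cross; split=> [[C1 [C2 [h1 h2 /clause_sat_or [Y [Z [hs hY hZ]]]]]]|].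
  by exists Y, Z; split=> //; [exists C1 | exists C2].
move=> [Y [Z [hs [C1 h1 hY] [C2 h2 hZ]]]].
by exists C1, C2; split=> //; apply/clause_sat_or; exists Y, Z.
Qed.

Lemma nf_sat_and N1 N2 X :
  nf_sat (cross clause_and N1 N2) X <-> nf_sat N1 X /\ nf_sat N2 X.
Proof.
rewrite nf_sat_cross; split=> [[C1 [C2 [h1 h2 /clause_sat_and [hC1 hC2]]]]|].
  by split; [exists C1 | exists C2].
move=> [[C1 h1 hC1] [C2 h2 hC2]].
by exists C1, C2; split=> //; apply/clause_sat_and.
Qed.

Lemma nf_sat_ex v N X :
  nf_sat (List.map (clause_ex v) N) X <->
  exists F, (forall s, X s -> exists m, F s m) /\ nf_sat N (team_ext X v F).
Proof.
split=> [[_ /List.in_map_iff [C [<- hC]] /clause_sat_ex [F [hF hCF]]]|].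
  by exists F; split=> //; exists C.
move=> [F [hF [C hC hCF]]].
by exists (clause_ex v C); [exact: List.in_map | apply/clause_sat_ex; exists F].
Qed.

Lemma nf_sat_all v N X :
  nf_sat (List.map (clause_all v) N) X <-> nf_sat N (team_dup X v).
Proof.
split=> [[_ /List.in_map_iff [C [<- hC]] /clause_sat_all hCX]|[C hC /clause_sat_all hCX]].
  by exists C.
by exists (clause_all v C) => //; exact: List.in_map.
Qed.

Lemma nf_sat_not P N X : nf_bounded P N -> team_defined P X ->
  nf_sat (nf_not N) X <-> ~ nf_sat N X.
Proof.
elim: N => [|C N IH] hN hX /=.
  split=> [_ [? []]|_]; exists (fo_true, [::]); first by left.
  by split=> [s _|_ []]; exact: holds_fo_true.
rewrite nf_sat_and (clause_sat_neg (hN C (or_introl erefl)) hX).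
rewrite (IH (fun C' hC' => hN C' (or_intror hC')) hX).
split=> [[hC hN'] [C' [<-|hC'] hs]|hn]; first exact: hC.
  by apply: hN'; exists C'.
split=> [hC|[C' hC' hs]]; apply: hn; first by exists C; first left.
by exists C'; first right.
Qed.

Lemma sat_witnesses bs X :
  sat (witnesses bs) X <-> forall b, List.In b bs -> exists2 s, X s & holds b s.
Proof.
elim: bs X => [|b bs IH] X /=.
  by split=> [_ ? []|_]; apply/(sat_of_fo fo_true) => s _; exact: holds_fo_true.
split=> [[Y [Z [hs [[/sat_of_fo hY [s hsY]] /IH hZ]]]] b' [<-|hb]|h].
- by exists s; [apply/hs; left | exact: hY].
- by have [t htZ hbt] := hZ _ hb; exists t => //; apply/hs; right.
- have [s hs hbs] := h b (or_introl erefl).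
  exists (fun s => X s /\ holds b s), X; split.
    by move=> s'; split=> [|[[]|]]; [right|..].
  split; first by split; [apply/sat_of_fo => ? [] | exists s].
  by apply/IH => b' hb'; apply: h; right.
Qed.

Lemma sat_clause_formula C X : sat (clause_formula C) X <-> clause_sat C X.
Proof. by rewrite /= sat_of_fo sat_witnesses. Qed.

Lemma sat_nf_formula N X : sat (nf_formula N) X <-> nf_sat N X.
Proof.
elim: N => [|C N IH].
  by split=> [[/(sat_of_fo fo_false) h [s /h /holds_fo_false []]]|[? []]].
rewrite -[sat _ X]/(sat (clause_formula C) X \/ sat (nf_formula N) X).
rewrite sat_clause_formula IH; split=> [[hC|[C' hC' h]]|[C' [<-|hC'] h]].
- by exists C; first left.
- by exists C'; first right.
- by left.
- by right; exists C'.
Qed.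

Lemma sat_fo_false_nonempty X : ~ sat (of_fo fo_false) X <-> exists s, X s.
Proof.
rewrite sat_of_fo; split=> [hX|[s hs] hX]; last exact: holds_fo_false (hX s hs).
by apply: NNPP => hn; apply: hX => s hs; case: hn; exists s.
Qed.

Lemma sat_to_tilde p X : sat (to_tilde p) X <-> sat p X.
Proof.
elim: p X => [a|a|p IHp q IHq|p IHp q IHq|v p IH|v p IH| |p IHp q IHq|p IH] X //=.
- by split=> [] [Y [Z [hs [/IHp hY /IHq hZ]]]]; exists Y, Z.
- by rewrite IHp IHq.
- by split=> [] [F [hF /IH hp]]; exists F.
- exact: sat_fo_false_nonempty.
- by rewrite IHp IHq; case: (classic (sat p X)); tauto.
- by rewrite IH.
Qed.
End Structure.

(* The clauses mention only free variables of [p], so that [nf_sat_not] applies to every team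
   assigning them. *)
Definition normal_form (p : formula S) (N : list clause) :=
  nf_bounded (fun x => free x p) N /\
  forall (A : structure S) (X : team A),
    team_defined (fun x => free x p) X -> (sat p X <-> nf_sat N X).

Lemma normal_form_of_fo p : normal_form (of_fo p) [:: (p, [::])].
Proof.
split=> [_ [<-|[]]|A X _]; first by split=> [x|? []].
rewrite sat_of_fo; split=> [h|[_ [<-|[]] [h _]] //].
by exists (p, [::]); [left | split=> // ? []].
Qed.

Lemma normal_form_or p q N1 N2 : normal_form p N1 -> normal_form q N2 ->
  normal_form (FOr p q) (cross clause_or N1 N2).
Proof.
move=> [b1 e1] [b2 e2]; split.
  apply: nf_bounded_cross; first exact: clause_bounded_or.
    by apply: nf_bounded_sub b1 => x; left.
  by apply: nf_bounded_sub b2 => x; right.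
move=> A X hX; rewrite nf_sat_or.
have dYZ Y Z : team_split X Y Z ->
    team_defined (fun x => free x p) Y /\ team_defined (fun x => free x q) Z.
  move=> hs; split; apply: team_defined_sub hX.
  - by move=> x; left.
  - by move=> s hsY; apply/hs; left.
  - by move=> x; right.
  - by move=> s hsZ; apply/hs; right.
split=> [[Y [Z [hs [hY hZ]]]]|[Y [Z [hs hY hZ]]]]; exists Y, Z;
  have [dY dZ] := dYZ Y Z hs.
  by split=> //; [apply/e1 | apply/e2].
by split=> //; split; [apply/e1 | apply/e2].
Qed.

Lemma normal_form_and p q N1 N2 : normal_form p N1 -> normal_form q N2 ->
  normal_form (FAnd p q) (cross clause_and N1 N2).
Proof.
move=> [b1 e1] [b2 e2]; split.
  apply: nf_bounded_cross; first exact: clause_bounded_and.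
    by apply: nf_bounded_sub b1 => x; left.
  by apply: nf_bounded_sub b2 => x; right.
move=> A X hX.
have dp : team_defined (fun x => free x p) X by apply: team_defined_sub hX => // x; left.
have dq : team_defined (fun x => free x q) X by apply: team_defined_sub hX => // x; right.
by rewrite nf_sat_and /= (e1 A X dp) (e2 A X dq).
Qed.

Lemma normal_form_ex v p N : normal_form p N ->
  normal_form (FEx v p) (List.map (clause_ex v) N).
Proof.
move=> [bN eN]; split.
  by apply: nf_bounded_map bN => C; exact: clause_bounded_ex.
move=> A X /= hX; rewrite nf_sat_ex.
have dF F : team_defined (fun x => free x p) (team_ext X v F).
  by apply: (team_defined_upd hX) => _ [s [m [hs [_ ->]]]]; exists s, m.
split=> [] [F [hF hp]]; exists F; split=> //; exact/(eN A _ (dF F)).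
Qed.

Lemma normal_form_all v p N : normal_form p N ->
  normal_form (FAll v p) (List.map (clause_all v) N).
Proof.
move=> [bN eN]; split.
  by apply: nf_bounded_map bN => C; exact: clause_bounded_all.
move=> A X /= hX; rewrite nf_sat_all; apply: eN.
by apply: (team_defined_upd hX) => _ [s [m [hs ->]]]; exists s, m.
Qed.

Lemma normal_form_tilde p N : normal_form p N -> normal_form (FTilde p) (nf_not N).
Proof.
move=> [bN eN]; split; first exact: nf_bounded_not.
by move=> A X hX /=; rewrite (nf_sat_not bN hX) (eN A X hX).
Qed.

Lemma normal_form_exists p : in_FO_tilde p -> exists N, normal_form p N.
Proof.
elim: p => [a|a|p IHp q IHq|p IHp q IHq|v p IH|v p IH| |p IHp q IHq|p IH] //= hp.
- by eexists; exact: (normal_form_of_fo (OLit a true)).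
- by eexists; exact: (normal_form_of_fo (OLit a false)).
- have [[N1 h1] [N2 h2]] := (IHp hp.1, IHq hp.2).
  by eexists; exact: normal_form_or h1 h2.
- have [[N1 h1] [N2 h2]] := (IHp hp.1, IHq hp.2).
  by eexists; exact: normal_form_and h1 h2.
- by have [N h] := IH hp; eexists; exact: normal_form_ex h.
- by have [N h] := IH hp; eexists; exact: normal_form_all h.
- by have [N h] := IH hp; eexists; exact: normal_form_tilde h.
Qed.
End FirstOrder.

Theorem mainTheorem1 :
  forall S : Sig,
    (forall p : formula S, in_FO_tilde p ->
       exists q : formula S, in_FO_NE_sqcup q /\ equivalent p q) /\
    (forall q : formula S, in_FO_NE_sqcup q ->
       exists p : formula S, in_FO_tilde p /\ equivalent q p).
Proof.
move=> S; split.
- move=> p /normal_form_exists [N [_ hN]].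
  exists (nf_formula N); split; first exact: in_FO_NE_sqcup_nf_formula.
  move=> A _ V X hV hp _; rewrite sat_nf_formula; apply: hN.
  by move=> s /hV hs x /hp /hs.
- move=> q _; exists (to_tilde q); split; first exact: in_FO_tilde_to_tilde.
  by move=> A _ V X _ _ _; rewrite sat_to_tilde.
Qed.
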